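(* Let $1<p\le s<\infty$ and $x\in\ell^{p,s}$. Then $$\zeta\!\left(\tfrac{s}{p'}+1\right)^{1/s}\|x\|_{p,s}\;\le\;\|x\|^*_{p,s}\;\le\;p'\,\|x\|_{p,s},$$ where $\zeta$ is the Riemann zeta function and $1/p+1/p'=1$. Both constants are optimal.
   Context: For a complex sequence $x=(x_n)_{n\ge1}$, $x^*$ denotes the nonincreasing rearrangement of $(|x_n|)_n$. For $1<p<\infty$, $1\le s<\infty$: $\|x\|_{p,s}=\bigl(\sum_{n=1}^\infty n^{s/p-1}(x_n^* )^s\bigr)^{1/s}$, and $\ell^{p,s}$ is the space of sequences with $\|x\|_{p,s}<\infty$. The maximal Lorentz norm is $\|x\|^*_{p,s}=\bigl(\sum_{n=1}^\infty n^{s/p-1}\bigl(\frac1n\sum_{k=1}^n x_k^*\bigr)^s\bigr)^{1/s}$. Here $1/p+1/p'=1$. *)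

From Stdlib Require Import Reals List.
From Coquelicot Require Import Coquelicot.
Open Scope R_scope.

(* Real power a^b for a > 0, and 0 for a <= 0 (so 0^b = 0 for b > 0). *)
Definition rpow (a b : R) : R := if Rle_dec a 0 then 0 else Rpower a b.

(* Sequences are x : nat -> C; the paper's x_{k+1} is (x k). *)

(* Set of admissible levels for the n-th rearranged value:
   t >= 0 and #{k : |x_k| > t} <= n-1. *)
Definition rearr_set (x : nat -> C) (n : nat) (t : R) : Prop :=
  0 <= t /\ exists l : list nat, (length l < n)%nat /\
    forall k : nat, t < Cmod (x k) -> In k l.

(* Nonincreasing rearrangement x^*_n (n >= 1), as an extended real. *)
Definition xstar_bar (x : nat -> C) (n : nat) : Rbar := Glb_Rbar (rearr_set x n).
Definition xstar (x : nat -> C) (n : nat) : R := real (xstar_bar x n).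

(* Terms of the series defining ||x||_{p,s}^s, indexed from m = 0 (n = m+1). *)
Definition lorentz_term (p s : R) (x : nat -> C) (m : nat) : R :=
  rpow (INR (S m)) (s / p - 1) * rpow (xstar x (S m)) s.

Definition max_lorentz_term (p s : R) (x : nat -> C) (m : nat) : R :=
  rpow (INR (S m)) (s / p - 1) *
  rpow (/ INR (S m) * sum_f_R0 (fun k => xstar x (S k)) m) s.

Definition in_lorentz (p s : R) (x : nat -> C) : Prop :=
  (forall n : nat, (1 <= n)%nat -> is_finite (xstar_bar x n)) /\
  ex_series (lorentz_term p s x).

Definition lorentz_norm (p s : R) (x : nat -> C) : R :=
  rpow (Series (lorentz_term p s x)) (/ s).

Definition max_lorentz_norm (p s : R) (x : nat -> C) : R :=
  rpow (Series (max_lorentz_term p s x)) (/ s).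

Definition zeta (a : R) : R := Series (fun m : nat => / rpow (INR (S m)) a).

Definition conj_exp (p : R) : R := p / (p - 1).

From Stdlib Require Import Reals List Lra Lia.
From Coquelicot Require Import Coquelicot.
Open Scope R_scope.

(* Write [a_k = x^*_(k+1)], [c = s/p - 1] and [A_m = (a_0 + ... + a_m) / (m+1)].

   The upper bound is the weighted Hardy inequality [sum (m+1)^c A_m^s <= p'^s sum (m+1)^c a_m^s],
   valid for [0 <= c < s - 1] and [p' = s / (s - 1 - c)]. A tangent-line estimate for [t^s] gives the
   telescoping bound [(m+1)^c A_m^s - p' (m+1)^c A_m^(s-1) a_m <= D_(m-1) - D_m] with
   [D_m = (p'/s) (m+1)^(c+1) A_m^s], and Young's inequality absorbs the cross terms.

   For the lower bound, [(m+1)^c A_m^s = (m+1)^(-al) (a_0 + ... + a_m)^s] with [al = s - c = s/p' + 1].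
   By convexity [(a_0 + ... + a_m)^s >= sum_(k <= m) ((k+1)^s - k^s) a_k^s] when [a] is nonincreasing;
   exchanging the sums and Abel summation against the nonincreasing [a_k^s] reduce the claim to the
   indicators of [{0, ..., m}], for which it follows by cutting the index set into blocks of length [m+1].

   The unit vector attains the lower constant. For the upper one take [a_k = (k+1)^(g-1)] with [g]
   slightly below [1/p']: both series are then comparable to [zeta (1 + s (1/p' - g))], which blows up,
   while eventually [A_m >= (1 - dl) a_m / g] with [1/g > p']. *)

(** * Real powers *)

Lemma rpow_Rpower a b : 0 < a -> rpow a b = Rpower a b.
Proof. intros Ha; unfold rpow; destruct (Rle_dec a 0); [lra | reflexivity]. Qed.

Lemma rpow_nonpos a b : a <= 0 -> rpow a b = 0.
Proof. intros Ha; unfold rpow; destruct (Rle_dec a 0); [reflexivity | lra]. Qed.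

Lemma rpow_0_l b : rpow 0 b = 0.
Proof. apply rpow_nonpos; lra. Qed.

Lemma rpow_1_l b : rpow 1 b = 1.
Proof. rewrite rpow_Rpower by lra. unfold Rpower. rewrite ln_1, Rmult_0_r; apply exp_0. Qed.

Lemma rpow_0_r a : 0 < a -> rpow a 0 = 1.
Proof. intros Ha; rewrite rpow_Rpower by exact Ha; apply Rpower_O, Ha. Qed.

Lemma rpow_1_r a : 0 <= a -> rpow a 1 = a.
Proof.
  intros [Ha | <-]; [| apply rpow_0_l].
  rewrite rpow_Rpower by exact Ha; apply Rpower_1, Ha.
Qed.

Lemma rpow_gt_0 a b : 0 < a -> 0 < rpow a b.
Proof. intros Ha; rewrite rpow_Rpower by exact Ha; apply exp_pos. Qed.

Lemma rpow_ge_0 a b : 0 <= rpow a b.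
Proof.
  destruct (Rle_dec a 0) as [Ha | Ha].
  - rewrite rpow_nonpos by exact Ha; lra.
  - left; apply rpow_gt_0; lra.
Qed.

Lemma rpow_mult_distr a b c : 0 <= a -> 0 <= b -> rpow (a * b) c = rpow a c * rpow b c.
Proof.
  intros [Ha | <-] [Hb | <-]; try (rewrite ?Rmult_0_l, ?Rmult_0_r, !rpow_0_l; ring).
  rewrite !rpow_Rpower by (try apply Rmult_lt_0_compat; assumption).
  unfold Rpower. rewrite ln_mult, <- exp_plus by assumption. f_equal; ring.
Qed.

Lemma rpow_mult a b c : 0 <= a -> rpow (rpow a b) c = rpow a (b * c).
Proof.
  intros [Ha | <-]; [| rewrite !rpow_0_l; reflexivity].
  rewrite (rpow_Rpower a b), !rpow_Rpower by (try apply exp_pos; exact Ha).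
  apply Rpower_mult.
Qed.

Lemma rpow_plus a b c : 0 < a -> rpow a (b + c) = rpow a b * rpow a c.
Proof. intros Ha; rewrite !rpow_Rpower by exact Ha; apply Rpower_plus. Qed.

Lemma rpow_opp a c : 0 < a -> rpow a (- c) = / rpow a c.
Proof. intros Ha; rewrite !rpow_Rpower by exact Ha; apply Rpower_Ropp. Qed.

Lemma rpow_inv a c : 0 < a -> rpow (/ a) c = / rpow a c.
Proof.
  intros Ha. rewrite !rpow_Rpower by (try apply Rinv_0_lt_compat; exact Ha).
  unfold Rpower. rewrite ln_Rinv, <- exp_Ropp by exact Ha. f_equal; ring.
Qed.

Lemma rpow_minus_1 a s : 0 <= a -> 1 < s -> rpow a s = rpow a (s - 1) * a.
Proof.
  intros [Ha | <-] Hs; [| rewrite !rpow_0_l; ring].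
  replace s with ((s - 1) + 1) at 1 by ring. rewrite rpow_plus, rpow_1_r; lra.
Qed.

Lemma rpow_le_l a b c : 0 <= a <= b -> 0 <= c -> rpow a c <= rpow b c.
Proof.
  intros [[Ha | <-] Hab] Hc.
  - rewrite !rpow_Rpower by lra. apply Rle_Rpower_l; lra.
  - rewrite rpow_0_l; apply rpow_ge_0.
Qed.

Lemma rpow_lt_l a b c : 0 <= a < b -> 0 < c -> rpow a c < rpow b c.
Proof.
  intros [[Ha | <-] Hab] Hc.
  - rewrite !rpow_Rpower by lra. apply Rlt_Rpower_l; lra.
  - rewrite rpow_0_l; apply rpow_gt_0; lra.
Qed.

Lemma rpow_le_r a b c : 1 <= a -> b <= c -> rpow a b <= rpow a c.
Proof. intros Ha Hbc; rewrite !rpow_Rpower by lra; apply Rle_Rpower; assumption. Qed.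

Lemma rpow_rpow_inv a s : 0 <= a -> 0 < s -> rpow (rpow a s) (/ s) = a.
Proof.
  intros Ha Hs. rewrite rpow_mult by exact Ha.
  replace (s * / s) with 1 by (field; lra). apply rpow_1_r, Ha.
Qed.

Lemma INR_S_pos m : 0 < INR (S m).
Proof. apply lt_0_INR; lia. Qed.

Lemma rpow_weighted_amgm X Y t : 0 < X -> 0 < Y -> 0 <= t <= 1 ->
  rpow X t * rpow Y (1 - t) <= t * X + (1 - t) * Y.
Proof.
  intros HX HY Ht. rewrite !rpow_Rpower by assumption. unfold Rpower.
  rewrite <- (exp_ln X) at 2 by exact HX. rewrite <- (exp_ln Y) at 2 by exact HY.
  set (x := ln X); set (y := ln Y). rewrite <- exp_plus.
  set (m := t * x + (1 - t) * y).
  assert (Ex : exp x = exp m * exp (x - m)) by (rewrite <- exp_plus; f_equal; ring).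
  assert (Ey : exp y = exp m * exp (y - m)) by (rewrite <- exp_plus; f_equal; ring).
  rewrite Ex, Ey.
  pose proof (exp_ineq1_le (x - m)). pose proof (exp_ineq1_le (y - m)).
  pose proof (exp_pos m).
  assert (Hmean : 1 <= t * exp (x - m) + (1 - t) * exp (y - m)).
  { assert (t * (1 + (x - m)) <= t * exp (x - m)) by (apply Rmult_le_compat_l; lra).
    assert ((1 - t) * (1 + (y - m)) <= (1 - t) * exp (y - m)) by (apply Rmult_le_compat_l; lra).
    unfold m in *. nra. }
  nra.
Qed.

Lemma bernoulli_ge y g : 0 <= y -> 1 <= g -> 1 + g * (y - 1) <= rpow y g.
Proof.
  intros [Hy | <-] Hg; [| rewrite rpow_0_l; lra].
  assert (Hig : 0 < / g <= 1)
    by (split; [apply Rinv_0_lt_compat; lra | rewrite <- Rinv_1; apply Rinv_le_contravar; lra]).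
  pose proof (rpow_weighted_amgm (rpow y g) 1 (/ g) (rpow_gt_0 y g Hy) Rlt_0_1 ltac:(lra)) as H.
  rewrite rpow_1_l, Rmult_1_r, rpow_mult, Rinv_r, rpow_1_r in H by lra.
  assert (g * y <= g * (/ g * rpow y g + (1 - / g) * 1)) by (apply Rmult_le_compat_l; lra).
  replace (g * (/ g * rpow y g + (1 - / g) * 1)) with (rpow y g + g - 1) in * by (field; lra).
  lra.
Qed.

Lemma bernoulli_le y t : 0 <= y -> 0 <= t <= 1 -> rpow y t <= 1 + t * (y - 1).
Proof.
  intros [Hy | <-] Ht; [| rewrite rpow_0_l; nra].
  destruct (Req_dec t 1) as [-> | Ht1]; [rewrite rpow_1_r; lra |].
  pose proof (rpow_weighted_amgm y 1 t Hy Rlt_0_1 Ht). rewrite rpow_1_l in *. lra.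
Qed.

Lemma bernoulli_neg y g : 0 < y -> g <= 0 -> 1 + g * (y - 1) <= rpow y g.
Proof.
  intros Hy Hg. set (t := / (1 - g)).
  assert (Ht : 0 < t <= 1)
    by (split; [apply Rinv_0_lt_compat | unfold t; rewrite <- Rinv_1; apply Rinv_le_contravar]; lra).
  pose proof (rpow_weighted_amgm (rpow y g) y t (rpow_gt_0 y g Hy) Hy ltac:(lra)) as H.
  rewrite rpow_mult, <- rpow_plus in H by lra.
  replace (g * t + (1 - t)) with 0 in H by (unfold t; field; lra).
  rewrite rpow_0_r in H by exact Hy.
  assert ((1 - g) * 1 <= (1 - g) * (t * rpow y g + (1 - t) * y)) by (apply Rmult_le_compat_l; lra).
  replace ((1 - g) * (t * rpow y g + (1 - t) * y)) with (rpow y g - g * y) in * by (unfold t; field; lra).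
  lra.
Qed.

Lemma rpow_tangent_le u0 u s : 0 < u0 -> 0 <= u -> 1 <= s ->
  rpow u0 s + s * rpow u0 (s - 1) * (u - u0) <= rpow u s.
Proof.
  intros H0 Hu Hs.
  assert (Hi : 0 <= / u0) by (left; apply Rinv_0_lt_compat, H0).
  pose proof (bernoulli_ge (u / u0) s ltac:(apply Rmult_le_pos; lra) Hs) as H.
  unfold Rdiv in H. rewrite rpow_mult_distr, rpow_inv in H by lra.
  assert (E : rpow u0 s = rpow u0 (s - 1) * u0).
  { replace s with ((s - 1) + 1) at 1 by ring. rewrite rpow_plus, rpow_1_r; lra. }
  pose proof (rpow_gt_0 u0 s H0). pose proof (rpow_gt_0 u0 (s - 1) H0).
  assert (rpow u0 s * (1 + s * (u * / u0 - 1)) <= rpow u0 s * (rpow u s * / rpow u0 s))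
    by (apply Rmult_le_compat_l; lra).
  replace (rpow u0 s * (rpow u s * / rpow u0 s)) with (rpow u s) in * by (field; lra).
  rewrite E in *.
  replace (rpow u0 (s - 1) * u0 * (1 + s * (u * / u0 - 1))) with
    (rpow u0 (s - 1) * u0 + s * rpow u0 (s - 1) * (u - u0)) in * by (field; lra).
  lra.
Qed.

Lemma young_rpow A a K s : 0 <= A -> 0 <= a -> 0 < K -> 1 < s ->
  rpow A (s - 1) * a <= (s - 1) / (s * K) * rpow A s + rpow K (s - 1) / s * rpow a s.
Proof.
  intros HA Ha HK Hs.
  assert (H1 : 0 <= (s - 1) / (s * K) * rpow A s)
    by (apply Rmult_le_pos; [apply Rdiv_le_0_compat; nra | apply rpow_ge_0]).
  assert (H2 : 0 <= rpow K (s - 1) / s * rpow a s)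
    by (apply Rmult_le_pos; [apply Rdiv_le_0_compat; [apply rpow_ge_0 | lra] | apply rpow_ge_0]).
  destruct HA as [HA | <-]; [| rewrite rpow_0_l; lra].
  destruct Ha as [Ha | <-]; [| lra].
  set (t := (s - 1) / s).
  assert (Ht : 0 <= t <= 1) by (unfold t; split; [apply Rdiv_le_0_compat | apply -> Rdiv_le_1]; lra).
  assert (HX : 0 < rpow A s / K) by (apply Rdiv_lt_0_compat; [apply rpow_gt_0 |]; lra).
  assert (HY : 0 < rpow K (s - 1) * rpow a s) by (apply Rmult_lt_0_compat; apply rpow_gt_0; lra).
  pose proof (rpow_weighted_amgm _ _ t HX HY Ht) as H.
  assert (E1 : rpow (rpow A s / K) t = rpow A (s - 1) * / rpow K t).
  { unfold Rdiv. rewrite rpow_mult_distr, rpow_mult, rpow_inv by (try left; try apply rpow_gt_0; try apply Rinv_0_lt_compat; lra).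
    replace (s * t) with (s - 1) by (unfold t; field; lra). reflexivity. }
  assert (E2 : rpow (rpow K (s - 1) * rpow a s) (1 - t) = rpow K t * a).
  { rewrite rpow_mult_distr, !rpow_mult by (try left; try apply rpow_gt_0; lra).
    replace (s * (1 - t)) with 1 by (unfold t; field; lra).
    replace ((s - 1) * (1 - t)) with t by (unfold t; field; lra).
    rewrite rpow_1_r by lra. reflexivity. }
  rewrite E1, E2 in H.
  replace (rpow A (s - 1) * / rpow K t * (rpow K t * a)) with (rpow A (s - 1) * a) in H
    by (field; apply Rgt_not_eq, rpow_gt_0; lra).
  replace ((s - 1) / (s * K) * rpow A s + rpow K (s - 1) / s * rpow a s) with
    (t * (rpow A s / K) + (1 - t) * (rpow K (s - 1) * rpow a s)) by (unfold t; field; lra).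
  exact H.
Qed.

(** * Series and finite sums *)

Lemma Un_cv_Series a : ex_series a -> Un_cv (sum_f_R0 a) (Series a).
Proof. intros H. apply is_series_Reals, Series_correct, H. Qed.

Lemma Un_cv_const (l : R) : Un_cv (fun _ => l) l.
Proof. intros e He. exists O. intros. unfold R_dist. rewrite Rminus_diag, Rabs_R0. lra. Qed.

Lemma sum_le_Series a N : (forall n, 0 <= a n) -> ex_series a -> sum_f_R0 a N <= Series a.
Proof. intros Ha Hex. apply sum_incr; [apply Un_cv_Series |]; assumption. Qed.

Lemma Series_ge_0 a : (forall n, 0 <= a n) -> ex_series a -> 0 <= Series a.
Proof. intros Ha Hex. eapply Rle_trans; [apply (Ha O) | apply (sum_le_Series a 0 Ha Hex)]. Qed.

Lemma ex_series_sum_bounded a B : (forall n, 0 <= a n) -> (forall N, sum_f_R0 a N <= B) ->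
  ex_series a /\ Series a <= B.
Proof.
  intros Ha HB.
  assert (Hg : Un_growing (sum_f_R0 a)) by (intro n; simpl; specialize (Ha (S n)); lra).
  destruct (growing_cv _ Hg) as [l Hl]; [exists B; intros x [n ->]; apply HB |].
  assert (Hex : ex_series a) by (apply ex_series_Reals_1; exists l; exact Hl).
  split; [exact Hex |].
  apply (Rle_cv_lim (Un := sum_f_R0 a) (Vn := fun _ => B)); [exact HB | apply Un_cv_Series, Hex | apply Un_cv_const].
Qed.

Lemma le_Series_of_partial c a B : (forall N, c * sum_f_R0 a N <= B) -> ex_series a ->
  c * Series a <= B.
Proof.
  intros H Hex.
  apply (Rle_cv_lim (Un := fun N => c * sum_f_R0 a N) (Vn := fun _ => B)); [exact H | | apply Un_cv_const].
  apply CV_mult; [apply Un_cv_const | apply Un_cv_Series, Hex].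
Qed.

Lemma ex_series_nonneg_le a b : (forall n, 0 <= a n <= b n) -> ex_series b -> ex_series a.
Proof.
  intros H Hb. apply ex_series_Reals_1, (Rseries_CV_comp a b H), ex_series_Reals_0, Hb.
Qed.

Lemma Series_sum_f_R0_comm (F : nat -> nat -> R) N : (forall k, ex_series (F k)) ->
  ex_series (fun n => sum_f_R0 (fun k => F k n) N) /\
  Series (fun n => sum_f_R0 (fun k => F k n) N) = sum_f_R0 (fun k => Series (F k)) N.
Proof.
  intros HF. induction N as [| N [IHex IHeq]]; [split; [apply HF | reflexivity] |].
  assert (E : forall n, sum_f_R0 (fun k => F k n) (S N) = sum_f_R0 (fun k => F k n) N + F (S N) n)
    by (intro; apply tech5).
  split.
  - eapply ex_series_ext; [intro n; symmetry; apply E | apply (ex_series_plus _ _ IHex (HF (S N)))].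
  - rewrite (Series_ext _ _ E), Series_plus, IHeq, tech5 by (apply IHex || apply HF). reflexivity.
Qed.

Lemma Series_eventually_scal_le kap u v n0 : 0 <= kap ->
  (forall m, 0 <= u m <= 1) -> (forall m, 0 <= v m) ->
  (forall m, (n0 <= m)%nat -> kap * u m <= v m) ->
  (0 < n0)%nat -> ex_series u -> ex_series v ->
  kap * (Series u - INR n0) <= Series v.
Proof.
  intros Hk Hu Hv Huv Hn0 Hexu Hexv.
  rewrite (Series_incr_n v n0 Hn0 Hexv), (Series_incr_n u n0 Hn0 Hexu).
  assert (Hhead : sum_f_R0 u (pred n0) <= INR n0).
  { replace (INR n0) with (sum_f_R0 (fun _ => 1) (pred n0))
      by (rewrite sum_cte; destruct n0; [lia | simpl; ring]).
    apply sum_growing; intro; apply Hu. }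
  assert (0 <= sum_f_R0 v (pred n0)) by (apply cond_pos_sum, Hv).
  assert (kap * Series (fun k => u (n0 + k)%nat) <= Series (fun k => v (n0 + k)%nat)).
  { rewrite <- Series_scal_l. apply Series_le; [| apply ex_series_incr_n, Hexv].
    intro k. split; [apply Rmult_le_pos; [exact Hk | apply Hu] | apply Huv; lia]. }
  assert (kap * (sum_f_R0 u (pred n0) - INR n0) <= 0)
    by (replace 0 with (kap * 0) by ring; apply Rmult_le_compat_l; lra).
  nra.
Qed.

Lemma sum_f_R0_le_mono a i j : (forall n, 0 <= a n) -> (i <= j)%nat -> sum_f_R0 a i <= sum_f_R0 a j.
Proof.
  intros Ha Hij. induction Hij as [| j Hij IH]; [lra |]. rewrite tech5. specialize (Ha (S j)). lra.
Qed.

Lemma nonincreasing_le (a : nat -> R) : (forall k, a (S k) <= a k) ->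
  forall i j, (i <= j)%nat -> a j <= a i.
Proof. intros H i j Hij. induction Hij as [| j Hij IH]; [lra |]. specialize (H j). lra. Qed.

(* [fsum f n] sums over [0 <= k < n], so that sums over [n * j] indices split into blocks. *)
Fixpoint fsum (f : nat -> R) (n : nat) : R :=
  match n with O => 0 | S n' => fsum f n' + f n' end.

Lemma fsum_S f n : fsum f (S n) = sum_f_R0 f n.
Proof. induction n as [| n IH]; [simpl; ring | simpl in *; rewrite IH; reflexivity]. Qed.

Lemma fsum_add f a b : fsum f (a + b) = fsum f a + fsum (fun r => f (a + r)%nat) b.
Proof.
  induction b as [| b IH]; [simpl; rewrite Nat.add_0_r; ring |].
  rewrite Nat.add_succ_r. simpl. rewrite IH. ring.
Qed.

Lemma fsum_blocks f j L : fsum f (L * j) = fsum (fun i => fsum (fun r => f (i * j + r)%nat) j) L.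
Proof. induction L as [| L IH]; [reflexivity |]. rewrite Nat.mul_succ_l, fsum_add, IH. reflexivity. Qed.

Lemma fsum_le f g n : (forall k, (k < n)%nat -> f k <= g k) -> fsum f n <= fsum g n.
Proof.
  induction n as [| n IH]; intros H; simpl; [lra |].
  assert (fsum f n <= fsum g n) by (apply IH; intros; apply H; lia).
  specialize (H n ltac:(lia)). lra.
Qed.

Lemma fsum_ge_0 f n : (forall k, (k < n)%nat -> 0 <= f k) -> 0 <= fsum f n.
Proof.
  induction n as [| n IH]; intros H; simpl; [lra |].
  assert (0 <= fsum f n) by (apply IH; intros; apply H; lia).
  specialize (H n ltac:(lia)). lra.
Qed.

Lemma fsum_scal f c n : fsum (fun k => c * f k) n = c * fsum f n.
Proof. induction n as [| n IH]; simpl; [| rewrite IH]; ring. Qed.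

Lemma sum_f_R0_Abel d b N :
  sum_f_R0 (fun k => d k * b k) N =
  fsum (fun m => sum_f_R0 d m * (b m - b (S m))) N + sum_f_R0 d N * b N.
Proof.
  induction N as [| N IH]; [simpl; ring |].
  rewrite (tech5 (fun k => d k * b k)), IH. cbn [fsum]. rewrite (tech5 d N). ring.
Qed.

Lemma Abel_nonneg d b N : (forall m, (m <= N)%nat -> 0 <= sum_f_R0 d m) -> (forall k, 0 <= b k) ->
  (forall k, b (S k) <= b k) -> 0 <= sum_f_R0 (fun k => d k * b k) N.
Proof.
  intros Hd Hb Hdec. rewrite sum_f_R0_Abel. apply Rplus_le_le_0_compat.
  - apply fsum_ge_0. intros k Hk. apply Rmult_le_pos; [apply Hd; lia | specialize (Hdec k); lra].
  - apply Rmult_le_pos; [apply Hd; lia | apply Hb].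
Qed.

(** * The weighted Hardy inequality *)

Definition mean (a : nat -> R) (m : nat) : R := / INR (S m) * sum_f_R0 a m.

(* [lorentz_term p s x] is [weighted_term (s / p - 1) s] of [k |-> x^*_(k+1)], and
   [max_lorentz_term p s x] the same for the means of that sequence. *)
Definition weighted_term (c s : R) (a : nat -> R) (m : nat) : R :=
  rpow (INR (S m)) c * rpow (a m) s.

Lemma weighted_term_ge_0 c s a m : 0 <= weighted_term c s a m.
Proof. apply Rmult_le_pos; apply rpow_ge_0. Qed.

Lemma mean_ge_0 a m : (forall k, 0 <= a k) -> 0 <= mean a m.
Proof. intros Ha. apply Rmult_le_pos; [left; apply Rinv_0_lt_compat, INR_S_pos | apply cond_pos_sum, Ha]. Qed.

Lemma mean_S a m : a (S m) = INR (S (S m)) * mean a (S m) - INR (S m) * mean a m.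
Proof.
  unfold mean. pose proof (INR_S_pos m). pose proof (INR_S_pos (S m)).
  rewrite tech5. field. lra.
Qed.

(* The ratio at which the tangent of [t^s] is taken in [hardy_step]: it turns the weight
   [q^c] into [(q+1)^c]. *)
Lemma hardy_tangent_ratio q c s : 0 < q -> 1 < s -> 0 <= c < s - 1 ->
  exists u0, 0 < u0 /\ q * u0 <= q + c / (s - 1) /\ rpow u0 (s - 1) = rpow (q + 1) c / rpow q c.
Proof.
  intros Hq Hs Hc. set (th := c / (s - 1)).
  assert (Hth : 0 <= th < 1)
    by (unfold th; split; [apply Rdiv_le_0_compat | apply -> Rdiv_lt_1]; lra).
  assert (Hnq : 0 < (q + 1) / q) by (apply Rdiv_lt_0_compat; lra).
  exists (rpow ((q + 1) / q) th). split; [| split].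
  - apply rpow_gt_0, Hnq.
  - pose proof (bernoulli_le ((q + 1) / q) th ltac:(lra) ltac:(lra)).
    assert (q * rpow ((q + 1) / q) th <= q * (1 + th * ((q + 1) / q - 1))) by (apply Rmult_le_compat_l; lra).
    replace (q * (1 + th * ((q + 1) / q - 1))) with (q + th) in * by (field; lra). lra.
  - rewrite rpow_mult by lra. replace (th * (s - 1)) with c by (unfold th; field; lra).
    unfold Rdiv. rewrite rpow_mult_distr, rpow_inv by (try left; try apply Rinv_0_lt_compat; lra).
    reflexivity.
Qed.

(* One step of the telescoping: [A] and [B] stand for the means at [q] and [q - 1]. *)
Lemma hardy_step q A B s c K : 0 < q -> 0 < A -> 0 <= B -> 1 < s -> 0 <= c < s - 1 ->
  K = s / (s - 1 - c) ->
  rpow (q + 1) c * rpow A s - K * (rpow (q + 1) c * rpow A (s - 1) * ((q + 1) * A - q * B))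
  <= K / s * (rpow q (c + 1) * rpow B s) - K / s * (rpow (q + 1) (c + 1) * rpow A s).
Proof.
  intros Hq HA HB Hs Hc HK. set (n := q + 1).
  assert (Hn : 0 < n) by (unfold n; lra).
  destruct (hardy_tangent_ratio q c s Hq Hs Hc) as [u0 [Hu0 [Hqu Eu]]]. fold n in Eu.
  set (B0 := A * u0).
  assert (HB0 : 0 < B0) by (unfold B0; nra).
  pose proof (rpow_tangent_le B0 B s HB0 HB ltac:(lra)) as Ht.
  assert (EB0 : rpow B0 (s - 1) = rpow A (s - 1) * (rpow n c / rpow q c))
    by (unfold B0; rewrite rpow_mult_distr, Eu by lra; reflexivity).
  rewrite (rpow_minus_1 B0 s), EB0 in Ht by lra.
  assert (Eq1 : rpow q (c + 1) = rpow q c * q) by (rewrite rpow_plus, rpow_1_r; lra).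
  assert (En1 : rpow n (c + 1) = rpow n c * n) by (rewrite rpow_plus, rpow_1_r; lra).
  rewrite Eq1, En1, (rpow_minus_1 A s) by lra.
  pose proof (rpow_gt_0 q c Hq). pose proof (rpow_gt_0 n c Hn). pose proof (rpow_gt_0 A (s - 1) HA).
  set (P := rpow n c * rpow A (s - 1)).
  assert (HP : 0 < P) by (unfold P; nra).
  set (W := K * (s - 1) / s).
  assert (HW : 1 <= W * (n - q * u0)).
  { assert (EW : W * (1 - c / (s - 1)) = 1) by (unfold W; rewrite HK; field; lra).
    assert (0 < W) by (unfold W; rewrite HK; apply Rdiv_lt_0_compat; [apply Rmult_lt_0_compat; [apply Rdiv_lt_0_compat |] |]; lra).
    assert (W * (1 - c / (s - 1)) <= W * (n - q * u0)) by (apply Rmult_le_compat_l; unfold n; lra). lra. }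
  assert (HKs : 0 < K / s) by (rewrite HK; apply Rdiv_lt_0_compat; [apply Rdiv_lt_0_compat |]; lra).
  assert (T : K / s * (q * P * B0 + s * q * P * (B - B0)) <= K / s * (rpow q c * q * rpow B s)).
  { apply Rmult_le_compat_l; [lra |].
    replace (q * P * B0 + s * q * P * (B - B0)) with
      (rpow q c * q * (rpow A (s - 1) * (rpow n c / rpow q c) * B0
        + s * (rpow A (s - 1) * (rpow n c / rpow q c)) * (B - B0))) by (unfold P; field; lra).
    apply Rmult_le_compat_l; nra. }
  assert (E : K / s * (q * P * B0 + s * q * P * (B - B0)) - K / s * (P * n * A)
     - (P * A - K * (P * (n * A - q * B))) = P * A * (W * (n - q * u0) - 1))
    by (unfold W, B0; field; lra).
  assert (0 <= P * A * (W * (n - q * u0) - 1)) by (apply Rmult_le_pos; nra).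
  replace (rpow n c * (rpow A (s - 1) * A)) with (P * A) by (unfold P; ring).
  replace (rpow n c * rpow A (s - 1) * (n * A - q * B)) with (P * (n * A - q * B)) by (unfold P; ring).
  replace (rpow n c * n * (rpow A (s - 1) * A)) with (P * n * A) by (unfold P; ring).
  lra.
Qed.

Lemma hardy_telescoping c s K a N : 1 < s -> 0 <= c < s - 1 -> K = s / (s - 1 - c) ->
  (forall k, 0 <= a k) ->
  sum_f_R0 (fun m => weighted_term c s (mean a) m
                     - K * (rpow (INR (S m)) c * rpow (mean a m) (s - 1) * a m)) N
  <= - (K / s * (rpow (INR (S N)) (c + 1) * rpow (mean a N) s)).
Proof.
  intros Hs Hc HK Ha.
  assert (HKs : 0 < K / s) by (rewrite HK; apply Rdiv_lt_0_compat; [apply Rdiv_lt_0_compat |]; lra).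
  induction N as [| N IH].
  - assert (E0 : mean a 0 = a 0%nat) by (unfold mean; simpl; field).
    simpl. unfold weighted_term. rewrite E0, (rpow_minus_1 (a 0%nat) s) by (apply Ha || lra).
    replace (INR 1) with 1 by reflexivity. rewrite !rpow_1_l.
    assert (HW : 1 <= K * (s - 1) / s).
    { rewrite HK. replace (s / (s - 1 - c) * (s - 1) / s) with ((s - 1) / (s - 1 - c)) by (field; lra).
      apply Rmult_le_reg_r with (s - 1 - c); [lra |]. unfold Rdiv; rewrite Rmult_assoc, Rinv_l; lra. }
    assert (0 <= rpow (a 0%nat) (s - 1) * a 0%nat) by (apply Rmult_le_pos; [apply rpow_ge_0 | apply Ha]).
    assert (0 <= rpow (a 0%nat) (s - 1) * a 0%nat * (K * (s - 1) / s - 1)) by (apply Rmult_le_pos; lra).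
    replace (1 * (rpow (a 0%nat) (s - 1) * a 0%nat) - K * (1 * rpow (a 0%nat) (s - 1) * a 0%nat))
      with (- (K / s * (1 * (rpow (a 0%nat) (s - 1) * a 0%nat)))
            - rpow (a 0%nat) (s - 1) * a 0%nat * (K * (s - 1) / s - 1)) by (field; lra).
    lra.
  - rewrite tech5. set (q := INR (S N)).
    assert (Hq : 0 < q) by apply INR_S_pos.
    assert (En : INR (S (S N)) = q + 1) by apply S_INR.
    unfold weighted_term. rewrite (mean_S a N), En. fold q.
    destruct (mean_ge_0 a (S N) Ha) as [HA | HA].
    + pose proof (hardy_step q (mean a (S N)) (mean a N) s c K Hq HA (mean_ge_0 a N Ha) Hs Hc HK).
      unfold weighted_term in IH; fold q in IH. lra.
    + rewrite <- HA, !rpow_0_l.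
      assert (0 <= K / s * (rpow q (c + 1) * rpow (mean a N) s))
        by (apply Rmult_le_pos; [lra | apply Rmult_le_pos; apply rpow_ge_0]).
      unfold weighted_term in IH; fold q in IH. lra.
Qed.

Lemma hardy_partial c s K a N : 1 < s -> 0 <= c < s - 1 -> K = s / (s - 1 - c) ->
  (forall k, 0 <= a k) ->
  sum_f_R0 (weighted_term c s (mean a)) N <= rpow K s * sum_f_R0 (weighted_term c s a) N.
Proof.
  intros Hs Hc HK Ha.
  assert (HK0 : 0 < K) by (rewrite HK; apply Rdiv_lt_0_compat; lra).
  set (Z := fun m => rpow (INR (S m)) c * rpow (mean a m) (s - 1) * a m).
  set (M := sum_f_R0 (weighted_term c s (mean a)) N).
  set (L := sum_f_R0 (weighted_term c s a) N).
  assert (Htel : M <= K * sum_f_R0 Z N).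
  { pose proof (hardy_telescoping c s K a N Hs Hc HK Ha) as H.
    rewrite minus_sum in H.
    assert (ES : sum_f_R0 (fun m => K * (rpow (INR (S m)) c * rpow (mean a m) (s - 1) * a m)) N
                 = K * sum_f_R0 Z N) by (rewrite scal_sum; apply sum_eq; intros; unfold Z; ring).
    rewrite ES in H.
    assert (0 <= K / s * (rpow (INR (S N)) (c + 1) * rpow (mean a N) s))
      by (apply Rmult_le_pos; [apply Rdiv_le_0_compat | apply Rmult_le_pos; apply rpow_ge_0]; lra).
    unfold M. lra. }
  assert (Hyoung : sum_f_R0 Z N <= (s - 1) / (s * K) * M + rpow K (s - 1) / s * L).
  { unfold M, L. rewrite !scal_sum, <- plus_sum. apply sum_Rle. intros m _.
    pose proof (young_rpow (mean a m) (a m) K s (mean_ge_0 a m Ha) (Ha m) HK0 Hs).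
    unfold Z, weighted_term.
    assert (0 <= rpow (INR (S m)) c) by apply rpow_ge_0.
    nra. }
  assert (M <= (s - 1) / s * M + rpow K (s - 1) * K / s * L).
  { eapply Rle_trans; [exact Htel |].
    replace ((s - 1) / s * M + rpow K (s - 1) * K / s * L)
      with (K * ((s - 1) / (s * K) * M + rpow K (s - 1) / s * L)) by (field; lra).
    apply Rmult_le_compat_l; lra. }
  rewrite (rpow_minus_1 K s) by lra.
  apply Rmult_le_reg_r with (/ s); [apply Rinv_0_lt_compat; lra |].
  replace (M * / s) with (M - (s - 1) / s * M) by (field; lra).
  replace (rpow K (s - 1) * K * L * / s) with (rpow K (s - 1) * K / s * L) by (field; lra).
  lra.
Qed.

Lemma hardy_series c s K a : 1 < s -> 0 <= c < s - 1 -> K = s / (s - 1 - c) ->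
  (forall k, 0 <= a k) -> ex_series (weighted_term c s a) ->
  ex_series (weighted_term c s (mean a)) /\
  Series (weighted_term c s (mean a)) <= rpow K s * Series (weighted_term c s a).
Proof.
  intros Hs Hc HK Ha Hex.
  apply ex_series_sum_bounded; [intro; apply weighted_term_ge_0 |]. intro N.
  eapply Rle_trans; [apply hardy_partial; eassumption |].
  apply Rmult_le_compat_l; [apply rpow_ge_0 |].
  apply sum_le_Series; [intro; apply weighted_term_ge_0 | exact Hex].
Qed.

(** * The lower bound for nonincreasing sequences *)

Definition zeta_term (al : R) (m : nat) : R := / rpow (INR (S m)) al.

Lemma zeta_term_pos al m : 0 < zeta_term al m.
Proof. apply Rinv_0_lt_compat, rpow_gt_0, INR_S_pos. Qed.

Lemma zeta_term_le_1 al m : 0 <= al -> zeta_term al m <= 1.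
Proof.
  intros Hal. unfold zeta_term. rewrite <- Rinv_1. apply Rinv_le_contravar; [lra |].
  rewrite <- (rpow_0_r (INR (S m))) by apply INR_S_pos.
  apply rpow_le_r; [rewrite S_INR; pose proof (pos_INR m); lra | exact Hal].
Qed.

Lemma weighted_term_mean c s a m : (forall k, 0 <= a k) ->
  weighted_term c s (mean a) m = zeta_term (s - c) m * rpow (sum_f_R0 a m) s.
Proof.
  intros Ha. unfold weighted_term, mean, zeta_term. pose proof (INR_S_pos m).
  rewrite rpow_mult_distr, rpow_inv by first [apply cond_pos_sum; exact Ha | left; apply Rinv_0_lt_compat; lra | lra].
  replace s with (c + (s - c)) at 1 by ring. rewrite rpow_plus by lra.
  field. split; apply Rgt_not_eq, rpow_gt_0; lra.
Qed.

Definition unit_seq (k : nat) : R := if Nat.eqb k 0 then 1 else 0.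

Lemma unit_seq_ge_0 k : 0 <= unit_seq k.
Proof. unfold unit_seq; destruct (Nat.eqb k 0); lra. Qed.

Lemma unit_seq_nonincreasing k : unit_seq (S k) <= unit_seq k.
Proof. unfold unit_seq; destruct (Nat.eqb k 0); simpl; lra. Qed.

Lemma weighted_term_unit c s : 0 < s ->
  ex_series (weighted_term c s unit_seq) /\ Series (weighted_term c s unit_seq) = 1.
Proof.
  intros Hs.
  assert (Hsum : forall N, sum_f_R0 (weighted_term c s unit_seq) N = 1).
  { induction N as [| N IH]; unfold weighted_term, unit_seq in *; simpl in *.
    - replace (INR 1) with 1 by reflexivity. rewrite !rpow_1_l. ring.
    - rewrite IH, rpow_0_l. ring. }
  destruct (ex_series_sum_bounded (weighted_term c s unit_seq) 1) as [Hex Hle];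
    [intro; apply weighted_term_ge_0 | intro N; rewrite Hsum; lra |].
  split; [exact Hex |].
  pose proof (sum_le_Series _ 0 (weighted_term_ge_0 c s unit_seq) Hex). rewrite Hsum in *. lra.
Qed.

Lemma weighted_term_mean_unit c s m : weighted_term c s (mean unit_seq) m = zeta_term (s - c) m.
Proof.
  rewrite weighted_term_mean by apply unit_seq_ge_0.
  replace (sum_f_R0 unit_seq m) with 1 by
    (induction m as [| m IH]; [reflexivity | rewrite tech5, <- IH; unfold unit_seq; simpl; ring]).
  rewrite rpow_1_l. ring.
Qed.

(* Hardy's inequality for the unit sequence is the convergence of the zeta series. *)
Lemma ex_series_zeta_term al : 1 < al -> ex_series (zeta_term al).
Proof.
  intros Hal.
  destruct (hardy_series 0 al (al / (al - 1 - 0)) unit_seq) as [Hex _];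
    [lra | lra | reflexivity | apply unit_seq_ge_0 | apply weighted_term_unit; lra |].
  eapply ex_series_ext; [| exact Hex]. intro m.
  rewrite weighted_term_mean_unit. f_equal; ring.
Qed.

Lemma zeta_ge_1 al : 1 < al -> 1 <= zeta al.
Proof.
  intros Hal.
  pose proof (sum_le_Series (zeta_term al) 0 (fun n => Rlt_le _ _ (zeta_term_pos al n))
    (ex_series_zeta_term al Hal)) as H.
  simpl in H. unfold zeta_term in H. replace (INR 1) with 1 in H by reflexivity.
  rewrite rpow_1_l, Rinv_1 in H. exact H.
Qed.

Lemma rpow_increment_le j t s : 0 <= j <= t -> 1 < s ->
  rpow (j + 1) s - rpow j s <= rpow (t + 1) s - rpow t s.
Proof.
  intros [Hj Hjt] Hs.
  destruct (Rle_dec (j + 1) t) as [H1 | H1].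
  - pose proof (rpow_tangent_le t (t + 1) s ltac:(lra) ltac:(lra) ltac:(lra)).
    pose proof (rpow_tangent_le (j + 1) j s ltac:(lra) Hj ltac:(lra)).
    pose proof (rpow_le_l (j + 1) t (s - 1) ltac:(lra) ltac:(lra)).
    nra.
  - destruct Hj as [Hj | <-].
    + pose proof (rpow_tangent_le (j + 1) (t + 1) s ltac:(lra) ltac:(lra) ltac:(lra)).
      pose proof (rpow_tangent_le t j s ltac:(lra) ltac:(lra) ltac:(lra)).
      pose proof (rpow_le_l t (j + 1) (s - 1) ltac:(lra) ltac:(lra)).
      assert (s * rpow t (s - 1) * (t - j) <= s * rpow (j + 1) (s - 1) * (t - j))
        by (apply Rmult_le_compat_r; [lra | apply Rmult_le_compat_l; lra]).
      nra.
    + destruct Hjt as [Ht | <-]; [| lra].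
      pose proof (rpow_tangent_le 1 (t + 1) s ltac:(lra) ltac:(lra) ltac:(lra)).
      pose proof (rpow_tangent_le t 0 s Ht ltac:(lra) ltac:(lra)).
      pose proof (rpow_le_l t 1 (s - 1) ltac:(lra) ltac:(lra)).
      rewrite Rplus_0_l, rpow_0_l, !rpow_1_l in *.
      assert (s * rpow t (s - 1) * t <= s * 1 * t)
        by (apply Rmult_le_compat_r; [lra | apply Rmult_le_compat_l; lra]).
      nra.
Qed.

Lemma rpow_increment_mul_le T a j s : 0 <= a -> 0 <= j -> j * a <= T -> 1 < s ->
  (rpow (j + 1) s - rpow j s) * rpow a s <= rpow (T + a) s - rpow T s.
Proof.
  intros [Ha | <-] Hj HT Hs; [| rewrite rpow_0_l, Rplus_0_r; lra].
  set (t := T / a).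
  assert (Ht : j <= t)
    by (unfold t; apply Rmult_le_reg_r with a; [| unfold Rdiv; rewrite Rmult_assoc, Rinv_l]; lra).
  pose proof (rpow_increment_le j t s ltac:(lra) Hs).
  replace (T + a) with (a * (t + 1)) by (unfold t; field; lra).
  replace T with (a * t) by (unfold t; field; lra).
  rewrite !rpow_mult_distr by lra.
  pose proof (rpow_gt_0 a s Ha). nra.
Qed.

Definition increment (s : R) (k : nat) : R := rpow (INR (S k)) s - rpow (INR k) s.

Lemma increment_ge_0 s k : 0 <= s -> 0 <= increment s k.
Proof.
  intros Hs. unfold increment.
  pose proof (rpow_le_l (INR k) (INR (S k)) s ltac:(split; [apply pos_INR | apply le_INR; lia]) Hs).
  lra.
Qed.

Lemma sum_increment s j : 0 < s -> sum_f_R0 (increment s) j = rpow (INR (S j)) s.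
Proof.
  intros Hs. induction j as [| j IH]; simpl sum_f_R0; unfold increment in *.
  - change (INR 0) with 0. rewrite rpow_0_l. ring.
  - rewrite IH. ring.
Qed.

Lemma sum_increment_mul_le s a m : 1 < s -> (forall k, 0 <= a k) -> (forall k, a (S k) <= a k) ->
  sum_f_R0 (fun k => increment s k * rpow (a k) s) m <= rpow (sum_f_R0 a m) s.
Proof.
  intros Hs Ha Hd. induction m as [| m IH].
  - simpl. unfold increment. change (INR 1) with 1. change (INR 0) with 0.
    rewrite rpow_1_l, rpow_0_l. lra.
  - rewrite tech5, (tech5 a).
    assert (Hsum : INR (S m) * a (S m) <= sum_f_R0 a m).
    { rewrite Rmult_comm, <- sum_cte. apply sum_Rle. intros k Hk. apply (nonincreasing_le a Hd); lia. }
    pose proof (rpow_increment_mul_le (sum_f_R0 a m) (a (S m)) (INR (S m)) s (Ha _) (pos_INR _) Hsum Hs).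
    replace (increment s (S m)) with (rpow (INR (S m) + 1) s - rpow (INR (S m)) s)
      by (unfold increment; rewrite (S_INR (S m)); reflexivity).
    lra.
Qed.

Definition indic_le (k n : nat) : R := if Nat.leb k n then 1 else 0.

Lemma indic_le_bounds k n : 0 <= indic_le k n <= 1.
Proof. unfold indic_le; destruct (Nat.leb k n); lra. Qed.

Lemma sum_mul_indic_le f n N : sum_f_R0 (fun k => f k * indic_le k n) N = sum_f_R0 f (Nat.min n N).
Proof.
  induction N as [| N IH].
  - simpl. unfold indic_le. rewrite Nat.min_0_r. simpl. ring.
  - rewrite tech5, IH. unfold indic_le. destruct (Nat.leb_spec (S N) n).
    + rewrite (Nat.min_r n (S N)), (Nat.min_r n N), tech5 by lia. ring.
    + rewrite (Nat.min_l n (S N)), (Nat.min_l n N) by lia. ring.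
Qed.

Definition zeta_tail (al : R) (k : nat) : R := Series (fun n => zeta_term al n * indic_le k n).

Lemma ex_series_zeta_tail al k : 1 < al -> ex_series (fun n => zeta_term al n * indic_le k n).
Proof.
  intros Hal. apply (ex_series_nonneg_le _ (zeta_term al)); [| apply ex_series_zeta_term, Hal].
  intro n. pose proof (zeta_term_pos al n). pose proof (indic_le_bounds k n). split; nra.
Qed.

Lemma zeta_term_block_le c s m i r : 0 <= c < s - 1 -> (r <= m)%nat ->
  zeta_term (s - c) i * rpow (INR (S r)) c
  <= zeta_term (s - c) (i * S m + r) * rpow (INR (S (Nat.min (i * S m + r) m))) s.
Proof.
  intros Hc Hr. unfold zeta_term. set (al := s - c).
  assert (Hpow : forall x, 0 < x -> / rpow x al * rpow x s = rpow x c).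
  { intros x Hx. replace s with (c + al) by (unfold al; ring).
    rewrite rpow_plus by exact Hx. field. apply Rgt_not_eq, rpow_gt_0, Hx. }
  destruct i as [| i].
  - simpl. rewrite Nat.min_l by lia. change (INR 1) with 1.
    rewrite rpow_1_l, Rinv_1, Rmult_1_l, Hpow by apply INR_S_pos. lra.
  - rewrite Nat.min_r by lia.
    pose proof (INR_S_pos (S i)) as Hi. pose proof (INR_S_pos m) as Hm.
    pose proof (INR_S_pos (S i * S m + r)) as Hn.
    assert (Hle : rpow (INR (S (S i * S m + r))) al <= rpow (INR (S (S i))) al * rpow (INR (S m)) al).
    { rewrite <- rpow_mult_distr by lra. apply rpow_le_l; [| unfold al; lra].
      rewrite <- mult_INR. split; [lra | apply le_INR; nia]. }
    assert (Hinv : / (rpow (INR (S (S i))) al * rpow (INR (S m)) al) <= / rpow (INR (S (S i * S m + r))) al)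
      by (apply Rinv_le_contravar; [apply rpow_gt_0 | exact Hle]; lra).
    assert (E : / (rpow (INR (S (S i))) al * rpow (INR (S m)) al) * rpow (INR (S m)) s
                = / rpow (INR (S (S i))) al * rpow (INR (S m)) c).
    { rewrite <- Hpow by exact Hm. field. split; apply Rgt_not_eq, rpow_gt_0; lra. }
    assert (rpow (INR (S r)) c <= rpow (INR (S m)) c)
      by (apply rpow_le_l; [split; [apply pos_INR | apply le_INR; lia] | lra]).
    pose proof (rpow_gt_0 (INR (S m)) s Hm).
    pose proof (Rinv_0_lt_compat _ (rpow_gt_0 (INR (S (S i))) al Hi)).
    apply Rle_trans with (/ rpow (INR (S (S i))) al * rpow (INR (S m)) c); [apply Rmult_le_compat_l; lra |].
    rewrite <- E. apply Rmult_le_compat_r; lra.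
Qed.

(* Cutting [N] into the blocks [i (m+1) + r], [r <= m], each contributing at least
   [(i+1)^(c-s) sum_(r <= m) (r+1)^c]. *)
Lemma zeta_mul_sum_le_Series_min c s m : 0 <= c < s - 1 ->
  ex_series (fun n => zeta_term (s - c) n * rpow (INR (S (Nat.min n m))) s) ->
  sum_f_R0 (fun r => rpow (INR (S r)) c) m * Series (zeta_term (s - c))
  <= Series (fun n => zeta_term (s - c) n * rpow (INR (S (Nat.min n m))) s).
Proof.
  intros Hc Hex.
  set (f := fun n => zeta_term (s - c) n * rpow (INR (S (Nat.min n m))) s).
  assert (Hf : forall n, 0 <= f n)
    by (intro n; apply Rmult_le_pos; [left; apply zeta_term_pos | apply rpow_ge_0]).
  set (G := sum_f_R0 (fun r => rpow (INR (S r)) c) m).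
  apply le_Series_of_partial; [| apply ex_series_zeta_term; lra]. intro L.
  eapply Rle_trans; [| apply (sum_le_Series f (m + L * S m) Hf Hex)].
  rewrite <- (fsum_S f). change (S (m + L * S m)) with (S L * S m)%nat.
  rewrite fsum_blocks, <- fsum_S, <- fsum_scal. apply fsum_le. intros i Hi.
  unfold G. rewrite <- fsum_S, Rmult_comm, <- fsum_scal.
  apply fsum_le. intros r Hr. apply zeta_term_block_le; [exact Hc | lia].
Qed.

Lemma zeta_mul_sum_le_increment_tail c s m : 0 <= c < s - 1 ->
  Series (zeta_term (s - c)) * sum_f_R0 (fun k => rpow (INR (S k)) c) m
  <= sum_f_R0 (fun k => increment s k * zeta_tail (s - c) k) m.
Proof.
  intros Hc.
  set (F := fun k n => increment s k * (zeta_term (s - c) n * indic_le k n)).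
  assert (HF : forall k, ex_series (F k))
    by (intro k; apply (ex_series_scal_l _ (fun n => zeta_term (s - c) n * indic_le k n)),
          ex_series_zeta_tail; lra).
  destruct (Series_sum_f_R0_comm F m HF) as [Hex Hcomm].
  assert (Emin : forall n, sum_f_R0 (fun k => F k n) m
                           = zeta_term (s - c) n * rpow (INR (S (Nat.min n m))) s).
  { intro n. rewrite <- sum_increment by lra. rewrite <- sum_mul_indic_le, scal_sum.
    apply sum_eq. intros k _. unfold F. ring. }
  replace (sum_f_R0 (fun k => increment s k * zeta_tail (s - c) k) m)
    with (Series (fun n => zeta_term (s - c) n * rpow (INR (S (Nat.min n m))) s)).
  - rewrite Rmult_comm. apply zeta_mul_sum_le_Series_min; [exact Hc |].
    exact (ex_series_ext _ _ Emin Hex).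
  - rewrite <- (Series_ext _ _ Emin), Hcomm. apply sum_eq. intros k _.
    unfold F, zeta_tail. apply Series_scal_l.
Qed.

Lemma sum_increment_tail_le_Series c s a N : 0 <= c < s - 1 ->
  (forall k, 0 <= a k) -> (forall k, a (S k) <= a k) ->
  ex_series (weighted_term c s (mean a)) ->
  sum_f_R0 (fun k => increment s k * zeta_tail (s - c) k * rpow (a k) s) N
  <= Series (weighted_term c s (mean a)).
Proof.
  intros Hc Ha Hd Hex.
  set (F := fun k n => increment s k * rpow (a k) s * (zeta_term (s - c) n * indic_le k n)).
  assert (HF : forall k, ex_series (F k))
    by (intro k; apply (ex_series_scal_l _ (fun n => zeta_term (s - c) n * indic_le k n)),
          ex_series_zeta_tail; lra).
  destruct (Series_sum_f_R0_comm F N HF) as [_ Hcomm].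
  replace (sum_f_R0 (fun k => increment s k * zeta_tail (s - c) k * rpow (a k) s) N)
    with (sum_f_R0 (fun k => Series (F k)) N)
    by (apply sum_eq; intros k _; unfold F, zeta_tail; rewrite Series_scal_l; ring).
  rewrite <- Hcomm. apply Series_le; [| exact Hex]. intro n.
  rewrite weighted_term_mean by exact Ha.
  replace (sum_f_R0 (fun k => F k n) N)
    with (zeta_term (s - c) n * sum_f_R0 (fun k => increment s k * rpow (a k) s * indic_le k n) N)
    by (rewrite scal_sum; apply sum_eq; intros; unfold F; ring).
  pose proof (zeta_term_pos (s - c) n).
  assert (0 <= sum_f_R0 (fun k => increment s k * rpow (a k) s * indic_le k n) N).
  { apply cond_pos_sum. intro k. pose proof (indic_le_bounds k n).
    apply Rmult_le_pos; [apply Rmult_le_pos; [apply increment_ge_0; lra | apply rpow_ge_0] | lra]. }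
  assert (sum_f_R0 (fun k => increment s k * rpow (a k) s * indic_le k n) N <= rpow (sum_f_R0 a n) s).
  { rewrite sum_mul_indic_le. eapply Rle_trans; [apply sum_increment_mul_le; lra || assumption |].
    apply rpow_le_l; [| lra]. split; [apply cond_pos_sum, Ha | apply sum_f_R0_le_mono; [exact Ha | lia]]. }
  split; [nra | apply Rmult_le_compat_l; lra].
Qed.

Lemma zeta_lower_bound c s a : 0 <= c < s - 1 ->
  (forall k, 0 <= a k) -> (forall k, a (S k) <= a k) -> ex_series (weighted_term c s a) ->
  Series (zeta_term (s - c)) * Series (weighted_term c s a) <= Series (weighted_term c s (mean a)).
Proof.
  intros Hc Ha Hd Hex.
  destruct (hardy_series c s (s / (s - 1 - c)) a) as [Hexm _]; try assumption; [lra | reflexivity |].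
  apply le_Series_of_partial; [| exact Hex]. intro N.
  set (Z := Series (zeta_term (s - c))).
  set (d := fun k => increment s k * zeta_tail (s - c) k - Z * rpow (INR (S k)) c).
  assert (Hd_sum : forall m, (m <= N)%nat -> 0 <= sum_f_R0 d m).
  { intros m _. unfold d. rewrite minus_sum.
    replace (sum_f_R0 (fun k => Z * rpow (INR (S k)) c) m) with (Z * sum_f_R0 (fun k => rpow (INR (S k)) c) m)
      by (rewrite scal_sum; apply sum_eq; intros; ring).
    pose proof (zeta_mul_sum_le_increment_tail c s m Hc) as HZ. fold Z in HZ. lra. }
  assert (Hpow_dec : forall k, rpow (a (S k)) s <= rpow (a k) s)
    by (intro k; apply rpow_le_l; [split; [apply Ha | apply Hd] | lra]).
  pose proof (Abel_nonneg d (fun k => rpow (a k) s) N Hd_sum (fun k => rpow_ge_0 _ _) Hpow_dec) as H.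
  cbv beta in H.
  pose proof (sum_increment_tail_le_Series c s a N Hc Ha Hd Hexm).
  replace (sum_f_R0 (fun k => d k * rpow (a k) s) N) with
    (sum_f_R0 (fun k => increment s k * zeta_tail (s - c) k * rpow (a k) s) N
     - Z * sum_f_R0 (weighted_term c s a) N) in H
    by (rewrite scal_sum, <- minus_sum; apply sum_eq; intros; unfold d, weighted_term; ring).
  lra.
Qed.

(** * Lorentz norms *)

Lemma xstar_ge_0 x n : is_finite (xstar_bar x n) -> 0 <= xstar x n.
Proof.
  intros Hf. unfold xstar. rewrite <- Hf.
  destruct (Glb_Rbar_correct (rearr_set x n)) as [_ Hglb].
  assert (H : Rbar_le (Finite 0) (xstar_bar x n)) by (apply Hglb; intros t [Ht _]; exact Ht).
  rewrite <- Hf in H. exact H.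
Qed.

Lemma xstar_S_le x n : is_finite (xstar_bar x n) -> is_finite (xstar_bar x (S n)) ->
  xstar x (S n) <= xstar x n.
Proof.
  intros H1 H2. unfold xstar.
  assert (H : Rbar_le (xstar_bar x (S n)) (xstar_bar x n)).
  { apply (is_glb_Rbar_subset (rearr_set x (S n)) (rearr_set x n));
      [| apply Glb_Rbar_correct | apply Glb_Rbar_correct].
    intros t [Ht [l [Hl Hk]]]. split; [exact Ht |]. exists l. split; [lia | exact Hk]. }
  rewrite <- H1, <- H2 in H. exact H.
Qed.

Lemma xstar_bar_nonincreasing x n : (forall i j, (i <= j)%nat -> Cmod (x j) <= Cmod (x i)) ->
  xstar_bar x (S n) = Finite (Cmod (x n)).
Proof.
  intros Hm. unfold xstar_bar. apply is_glb_Rbar_unique. split.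
  - intros t [Ht [l [Hl Hk]]]. simpl.
    destruct (Rle_dec (Cmod (x n)) t) as [H | H]; [exact H | exfalso].
    assert (Hincl : incl (seq 0 (S n)) l).
    { intros k Hin. apply in_seq in Hin. apply Hk. pose proof (Hm k n ltac:(lia)). lra. }
    apply NoDup_incl_length in Hincl; [| apply seq_NoDup]. rewrite length_seq in Hincl. lia.
  - intros b Hb. apply Hb. split; [apply Cmod_ge_0 |]. exists (seq 0 n).
    split; [rewrite length_seq; lia |].
    intros k Hk. apply in_seq. split; [lia |].
    destruct (Nat.lt_ge_cases k n) as [H | H]; [exact H |]. pose proof (Hm n k H). lra.
Qed.

Section NonincreasingSequence.

Variables (p s : R) (a : nat -> R).
Hypothesis a_ge_0 : forall k, 0 <= a k.
Hypothesis a_nonincreasing : forall k, a (S k) <= a k.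

Let x : nat -> C := fun k => RtoC (a k).

Lemma xstar_bar_RtoC n : xstar_bar x (S n) = Finite (a n).
Proof.
  unfold x. rewrite xstar_bar_nonincreasing.
  - rewrite Cmod_R, Rabs_pos_eq by apply a_ge_0. reflexivity.
  - intros i j Hij. rewrite !Cmod_R, !Rabs_pos_eq by apply a_ge_0.
    apply (nonincreasing_le a a_nonincreasing), Hij.
Qed.

Lemma in_lorentz_RtoC : ex_series (weighted_term (s / p - 1) s a) -> in_lorentz p s x.
Proof.
  intros Hex. split.
  - intros [| n] Hn; [lia | rewrite xstar_bar_RtoC; reflexivity].
  - eapply ex_series_ext; [| exact Hex]. intro m.
    unfold lorentz_term, xstar. rewrite xstar_bar_RtoC. reflexivity.
Qed.

Lemma lorentz_norm_RtoC : lorentz_norm p s x = rpow (Series (weighted_term (s / p - 1) s a)) (/ s).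
Proof.
  unfold lorentz_norm. f_equal. apply Series_ext. intro m.
  unfold lorentz_term, xstar. rewrite xstar_bar_RtoC. reflexivity.
Qed.

Lemma max_lorentz_norm_RtoC :
  max_lorentz_norm p s x = rpow (Series (weighted_term (s / p - 1) s (mean a))) (/ s).
Proof.
  unfold max_lorentz_norm. f_equal. apply Series_ext. intro m.
  unfold max_lorentz_term, weighted_term, mean. do 3 f_equal.
  apply sum_eq. intros k _. unfold xstar. rewrite xstar_bar_RtoC. reflexivity.
Qed.

End NonincreasingSequence.

Lemma weight_exponent_bounds p s : 1 < p -> p <= s -> 0 <= s / p - 1 < s - 1.
Proof.
  intros Hp Hps. split.
  - apply (Rplus_le_reg_r 1). ring_simplify.
    apply (Rmult_le_reg_r p); [lra |]. field_simplify; lra.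
  - apply (Rplus_lt_reg_r 1). ring_simplify.
    apply (Rmult_lt_reg_r p); [lra |]. field_simplify; nra.
Qed.

Lemma conj_exp_eq p s : 1 < p -> 0 < s -> conj_exp p = s / (s - 1 - (s / p - 1)).
Proof.
  intros Hp Hs. unfold conj_exp. field. repeat split; try lra.
  replace ((s - 1) * p - (s - p)) with (s * (p - 1)) by ring. apply Rmult_integral_contrapositive; lra.
Qed.

Lemma zeta_exponent_eq p s : 1 < p -> s / conj_exp p + 1 = s - (s / p - 1).
Proof. intros Hp. unfold conj_exp. field. lra. Qed.

Lemma conj_exp_pos p : 1 < p -> 0 < conj_exp p.
Proof. intros Hp. unfold conj_exp. apply Rdiv_lt_0_compat; lra. Qed.

Lemma lorentz_norm_bounds p s x : 1 < p -> p <= s -> in_lorentz p s x ->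
  ex_series (max_lorentz_term p s x) /\
  rpow (zeta (s / conj_exp p + 1)) (/ s) * lorentz_norm p s x <= max_lorentz_norm p s x /\
  max_lorentz_norm p s x <= conj_exp p * lorentz_norm p s x.
Proof.
  intros Hp Hps [Hfin Hex].
  set (a := fun k => xstar x (S k)).
  assert (Ha : forall k, 0 <= a k) by (intro k; apply xstar_ge_0, Hfin; lia).
  assert (Hd : forall k, a (S k) <= a k) by (intro k; apply xstar_S_le; apply Hfin; lia).
  pose proof (weight_exponent_bounds p s Hp Hps) as Hc.
  assert (Hs : 0 < s) by lra.
  change (lorentz_term p s x) with (weighted_term (s / p - 1) s a) in Hex.
  unfold max_lorentz_norm, lorentz_norm, zeta.
  change (max_lorentz_term p s x) with (weighted_term (s / p - 1) s (mean a)).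
  change (lorentz_term p s x) with (weighted_term (s / p - 1) s a).
  change (fun m => / rpow (INR (S m)) (s / conj_exp p + 1)) with (zeta_term (s / conj_exp p + 1)).
  rewrite zeta_exponent_eq by exact Hp.
  destruct (hardy_series (s / p - 1) s (conj_exp p) a) as [Hexm Hup];
    try assumption; [lra | apply conj_exp_eq; lra |].
  pose proof (zeta_lower_bound (s / p - 1) s a Hc Ha Hd Hex) as Hlow.
  assert (HL : 0 <= Series (weighted_term (s / p - 1) s a))
    by (apply Series_ge_0; [intro; apply weighted_term_ge_0 | exact Hex]).
  assert (HZ : 0 <= Series (zeta_term (s - (s / p - 1))))
    by (apply Series_ge_0; [intro; left; apply zeta_term_pos | apply ex_series_zeta_term; lra]).
  assert (Hinv : 0 <= / s) by (left; apply Rinv_0_lt_compat, Hs).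
  split; [exact Hexm | split].
  - rewrite <- rpow_mult_distr by assumption. apply rpow_le_l; [split; [apply Rmult_le_pos |] |]; assumption.
  - rewrite <- (rpow_rpow_inv (conj_exp p) s) at 1 by (try left; try apply conj_exp_pos; assumption).
    rewrite <- rpow_mult_distr by (try apply rpow_ge_0; assumption).
    apply rpow_le_l; [split; [apply Series_ge_0; [intro; apply weighted_term_ge_0 |] |] |]; assumption.
Qed.

Lemma lorentz_norms_unit_seq p s : 1 < p -> p <= s ->
  in_lorentz p s (fun k => RtoC (unit_seq k)) /\
  lorentz_norm p s (fun k => RtoC (unit_seq k)) = 1 /\
  max_lorentz_norm p s (fun k => RtoC (unit_seq k)) = rpow (zeta (s / conj_exp p + 1)) (/ s).
Proof.
  intros Hp Hps.
  destruct (weighted_term_unit (s / p - 1) s ltac:(lra)) as [Hex Hone].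
  split; [| split].
  - apply in_lorentz_RtoC; [apply unit_seq_ge_0 | apply unit_seq_nonincreasing | exact Hex].
  - rewrite lorentz_norm_RtoC by (apply unit_seq_ge_0 || apply unit_seq_nonincreasing).
    rewrite Hone. apply rpow_1_l.
  - rewrite max_lorentz_norm_RtoC by (apply unit_seq_ge_0 || apply unit_seq_nonincreasing).
    unfold zeta. f_equal. apply Series_ext. intro m.
    rewrite weighted_term_mean_unit, zeta_exponent_eq by exact Hp. reflexivity.
Qed.

(** * Optimality of the upper constant *)

Lemma rpow_S_sub_le_mul g y : 0 < y -> 0 < g < 1 ->
  rpow (y + 1) g - rpow y g <= g * rpow y (g - 1).
Proof.
  intros Hy Hg.
  pose proof (bernoulli_le ((y + 1) / y) g ltac:(apply Rdiv_le_0_compat; lra) ltac:(lra)) as H.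
  unfold Rdiv in H. rewrite rpow_mult_distr, rpow_inv in H by (try left; try apply Rinv_0_lt_compat; lra).
  pose proof (rpow_gt_0 y g Hy).
  assert (rpow y g * (rpow (y + 1) g * / rpow y g) <= rpow y g * (1 + g * ((y + 1) * / y - 1)))
    by (apply Rmult_le_compat_l; lra).
  replace (rpow y g * (rpow (y + 1) g * / rpow y g)) with (rpow (y + 1) g) in * by (field; lra).
  replace (rpow y (g - 1)) with (rpow y g * / y)
    by (unfold Rminus; rewrite rpow_plus, rpow_opp, rpow_1_r by lra; reflexivity).
  replace (rpow y g * (1 + g * ((y + 1) * / y - 1))) with (rpow y g + g * (rpow y g * / y)) in *
    by (field; lra).
  lra.
Qed.

Lemma rpow_opp_sub_le_mul eta y : 0 < y -> 0 < eta ->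
  rpow y (- eta) - rpow (y + 1) (- eta) <= eta * / rpow y (1 + eta).
Proof.
  intros Hy He.
  pose proof (bernoulli_neg ((y + 1) / y) (- eta) ltac:(apply Rdiv_lt_0_compat; lra) ltac:(lra)) as H.
  unfold Rdiv in H. rewrite rpow_mult_distr, rpow_inv in H by (try left; try apply Rinv_0_lt_compat; lra).
  pose proof (rpow_gt_0 y (- eta) Hy).
  assert (rpow y (- eta) * (1 + - eta * ((y + 1) * / y - 1))
          <= rpow y (- eta) * (rpow (y + 1) (- eta) * / rpow y (- eta)))
    by (apply Rmult_le_compat_l; lra).
  replace (rpow y (- eta) * (rpow (y + 1) (- eta) * / rpow y (- eta))) with (rpow (y + 1) (- eta)) in *
    by (field; lra).
  replace (/ rpow y (1 + eta)) with (rpow y (- eta) * / y)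
    by (rewrite <- rpow_opp by lra; replace (- (1 + eta)) with (- eta + - (1)) by ring;
        rewrite rpow_plus, (rpow_opp y 1), rpow_1_r by lra; reflexivity).
  replace (rpow y (- eta) * (1 + - eta * ((y + 1) * / y - 1))) with (rpow y (- eta) - eta * (rpow y (- eta) * / y)) in *
    by (field; lra).
  lra.
Qed.

Lemma zeta_term_partial_ge eta L : 0 < eta ->
  1 - rpow (INR (S (S L))) (- eta) <= eta * sum_f_R0 (zeta_term (1 + eta)) L.
Proof.
  intros He. induction L as [| L IH].
  - simpl. pose proof (rpow_opp_sub_le_mul eta 1 Rlt_0_1 He).
    unfold zeta_term. change (INR 1) with 1. change (INR 2) with (1 + 1).
    rewrite !rpow_1_l, Rinv_1 in *. lra.
  - rewrite tech5. pose proof (rpow_opp_sub_le_mul eta (INR (S (S L))) (INR_S_pos _) He).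
    rewrite <- S_INR in *. unfold zeta_term in *. lra.
Qed.

Lemma zeta_term_Series_ge_inv eta : 0 < eta -> / (2 * eta) <= Series (zeta_term (1 + eta)).
Proof.
  intros He.
  destruct (INR_unbounded (rpow 2 (/ eta))) as [L HL].
  pose proof (zeta_term_partial_ge eta L He).
  assert (Hsmall : rpow (INR (S (S L))) (- eta) <= / 2).
  { rewrite rpow_opp by apply INR_S_pos. apply Rinv_le_contravar; [lra |].
    rewrite <- (rpow_rpow_inv 2 (/ eta)), Rinv_inv by (try apply Rinv_0_lt_compat; lra).
    apply rpow_le_l; [| lra]. split; [apply rpow_ge_0 | rewrite !S_INR; lra]. }
  pose proof (sum_le_Series (zeta_term (1 + eta)) L (fun n => Rlt_le _ _ (zeta_term_pos _ n))
    (ex_series_zeta_term (1 + eta) ltac:(lra))).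
  assert (/ 2 <= eta * Series (zeta_term (1 + eta))) by nra.
  apply Rmult_le_reg_l with (2 * eta); [lra |]. rewrite Rinv_r by lra. lra.
Qed.

Definition power_seq (g : R) (k : nat) : R := rpow (INR (S k)) (g - 1).

Lemma power_seq_ge_0 g k : 0 <= power_seq g k.
Proof. apply rpow_ge_0. Qed.

Lemma power_seq_nonincreasing g k : g <= 1 -> power_seq g (S k) <= power_seq g k.
Proof.
  intros Hg. unfold power_seq. replace (g - 1) with (- (1 - g)) by ring.
  rewrite !rpow_opp by apply INR_S_pos.
  apply Rinv_le_contravar; [apply rpow_gt_0, INR_S_pos |].
  apply rpow_le_l; [split; [apply pos_INR | apply le_INR; lia] | lra].
Qed.

Lemma weighted_term_power_seq c s g m :
  weighted_term c s (power_seq g) m = zeta_term (s - c - g * s) m.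
Proof.
  unfold weighted_term, power_seq, zeta_term. pose proof (INR_S_pos m).
  rewrite rpow_mult, <- rpow_plus, <- rpow_opp by lra. f_equal. ring.
Qed.

Lemma sum_power_seq_ge g m : 0 < g < 1 ->
  rpow (INR (S (S m))) g - 1 <= g * sum_f_R0 (power_seq g) m.
Proof.
  intros Hg. induction m as [| m IH].
  - simpl. pose proof (rpow_S_sub_le_mul g 1 Rlt_0_1 Hg).
    unfold power_seq. change (INR 1) with 1. change (INR 2) with (1 + 1).
    rewrite !rpow_1_l in *. lra.
  - rewrite tech5. pose proof (rpow_S_sub_le_mul g (INR (S (S m))) (INR_S_pos _) Hg).
    rewrite <- S_INR in *. unfold power_seq in *. lra.
Qed.

Lemma weighted_term_mean_power_seq_ge c s g dl m : 0 < s -> 0 < g < 1 -> 0 < dl < 1 ->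
  / dl <= rpow (INR (S m)) g ->
  rpow ((1 - dl) / g) s * zeta_term (s - c - g * s) m <= weighted_term c s (mean (power_seq g)) m.
Proof.
  intros Hs Hg Hdl Hm. pose proof (INR_S_pos m) as Hpos.
  set (R := rpow (INR (S m)) g).
  assert (HR : 0 < R) by apply rpow_gt_0, Hpos.
  assert (HRS : R <= rpow (INR (S (S m))) g)
    by (apply rpow_le_l; [split; [lra | apply le_INR; lia] | lra]).
  assert (Hsum : (1 - dl) / g * R <= sum_f_R0 (power_seq g) m).
  { pose proof (sum_power_seq_ge g m Hg).
    assert (1 <= dl * R).
    { apply Rmult_le_reg_l with (/ dl); [apply Rinv_0_lt_compat; lra |].
      rewrite <- Rmult_assoc, Rinv_l, Rmult_1_l, Rmult_1_r by lra. exact Hm. }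
    apply Rmult_le_reg_l with g; [lra |].
    replace (g * ((1 - dl) / g * R)) with ((1 - dl) * R) by (field; lra). lra. }
  rewrite weighted_term_mean by apply power_seq_ge_0.
  assert (Hpow : rpow ((1 - dl) / g * R) s <= rpow (sum_f_R0 (power_seq g) m) s)
    by (apply rpow_le_l; [split; [apply Rmult_le_pos; [apply Rdiv_le_0_compat |] |] |]; lra).
  unfold R in Hpow. rewrite rpow_mult_distr, rpow_mult in Hpow
    by first [apply Rdiv_le_0_compat; lra | apply rpow_ge_0 | lra].
  assert (Ez : zeta_term (s - c - g * s) m = zeta_term (s - c) m * rpow (INR (S m)) (g * s)).
  { unfold zeta_term. replace (s - c) with ((s - c - g * s) + g * s) at 2 by ring.
    rewrite rpow_plus by lra. field. split; apply Rgt_not_eq, rpow_gt_0; lra. }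
  rewrite Ez. pose proof (zeta_term_pos (s - c) m).
  replace (rpow ((1 - dl) / g) s * (zeta_term (s - c) m * rpow (INR (S m)) (g * s)))
    with (zeta_term (s - c) m * (rpow ((1 - dl) / g) s * rpow (INR (S m)) (g * s))) by ring.
  apply Rmult_le_compat_l; lra.
Qed.

Lemma Series_mean_power_seq_ge p s g dl n0 : 1 < p -> p <= s -> 0 < dl < 1 ->
  (p - 1) / p / 2 <= g < (p - 1) / p -> (0 < n0)%nat -> / dl <= rpow (INR n0) ((p - 1) / p / 2) ->
  ex_series (weighted_term (s / p - 1) s (power_seq g)) /\
  rpow ((1 - dl) / g) s * (Series (zeta_term (1 + s * ((p - 1) / p - g))) - INR n0)
  <= Series (weighted_term (s / p - 1) s (mean (power_seq g))).
Proof.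
  intros Hp Hps Hdl Hg Hn0 Hdn0. set (eta := s * ((p - 1) / p - g)).
  assert (Heta : 0 < eta) by (unfold eta; apply Rmult_lt_0_compat; lra).
  assert (Hg1 : 0 < g < 1)
    by (split; [| apply Rlt_le_trans with ((p - 1) / p); [| apply Rmult_le_reg_r with p; [| field_simplify]]];
        try apply Rdiv_lt_0_compat; try apply Rdiv_le_0_compat; lra).
  assert (Ew : forall m, weighted_term (s / p - 1) s (power_seq g) m = zeta_term (1 + eta) m)
    by (intro m; rewrite weighted_term_power_seq; unfold eta; f_equal; field; lra).
  assert (Hex : ex_series (weighted_term (s / p - 1) s (power_seq g)))
    by (eapply ex_series_ext; [intro m; symmetry; apply Ew | apply ex_series_zeta_term; lra]).
  split; [exact Hex |].
  pose proof (weight_exponent_bounds p s Hp Hps) as Hc.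
  destruct (hardy_series (s / p - 1) s (s / (s - 1 - (s / p - 1))) (power_seq g)) as [Hexm _];
    try assumption; [lra | reflexivity | apply power_seq_ge_0 |].
  apply Series_eventually_scal_le;
    [apply rpow_ge_0 | | intro; apply weighted_term_ge_0 | | exact Hn0 | apply ex_series_zeta_term; lra | exact Hexm].
  - intro m. split; [left; apply zeta_term_pos | apply zeta_term_le_1; lra].
  - intros m Hm. replace (1 + eta) with (s - (s / p - 1) - g * s) by (unfold eta; field; lra).
    apply weighted_term_mean_power_seq_ge; [lra | exact Hg1 | exact Hdl |].
    apply Rle_trans with (rpow (INR n0) ((p - 1) / p / 2)); [exact Hdn0 |].
    apply Rle_trans with (rpow (INR (S m)) ((p - 1) / p / 2)).
    + apply rpow_le_l; [split; [apply pos_INR | apply le_INR; lia] | lra].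
    + apply rpow_le_r; [rewrite S_INR; pose proof (pos_INR m); lra | lra].
Qed.

Lemma exists_rpow_INR_ge y e : 0 < e -> exists n0, (0 < n0)%nat /\ y <= rpow (INR n0) e.
Proof.
  intros He. destruct (Rle_dec y 0) as [Hy | Hy].
  - exists 1%nat. split; [lia | eapply Rle_trans; [exact Hy | apply rpow_ge_0]].
  - destruct (INR_unbounded (rpow y (/ e))) as [n1 Hn1]. exists (S n1). split; [lia |].
    rewrite <- (rpow_rpow_inv y (/ e)), Rinv_inv by (try apply Rinv_0_lt_compat; lra).
    apply rpow_le_l; [split; [apply rpow_ge_0 | rewrite S_INR; lra] | lra].
Qed.

(* The head of length [n0] costs [kap n0], which a zeta sum [Z >= 1 / (2 eta)] absorbs. *)
Lemma large_zeta_absorbs_head cs mu kap Z M n0 eta : 0 < cs < mu -> 0 < n0 -> 0 < eta ->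
  eta <= (mu - cs) / (4 * mu * n0) -> / (2 * eta) <= Z -> mu <= kap -> kap * (Z - n0) <= M ->
  cs * Z < M.
Proof.
  intros Hcs Hn0 He Heta HZ Hkap HM.
  assert (Hbig : 2 * mu * n0 <= Z * (mu - cs)).
  { assert (Hprod : 4 * mu * n0 * eta <= mu - cs).
    { apply Rmult_le_compat_l with (r := 4 * mu * n0) in Heta; [| nra].
      replace (4 * mu * n0 * ((mu - cs) / (4 * mu * n0))) with (mu - cs) in Heta by (field; lra). lra. }
    assert (H2 : 1 <= Z * (2 * eta)).
    { apply Rmult_le_compat_r with (r := 2 * eta) in HZ; [| lra]. rewrite Rinv_l in HZ by lra. exact HZ. }
    nra. }
  assert (HZn : n0 <= Z) by nra.
  assert (mu * (Z - n0) <= kap * (Z - n0)) by (apply Rmult_le_compat_r; lra).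
  nra.
Qed.

Lemma mul_rpow_inv_lt c0 Z M s : 0 < c0 -> 0 <= Z -> 0 < s -> rpow c0 s * Z < M ->
  c0 * rpow Z (/ s) < rpow M (/ s).
Proof.
  intros Hc0 HZ Hs HM.
  rewrite <- (rpow_rpow_inv c0 s) at 1 by lra.
  rewrite <- rpow_mult_distr by (exact HZ || apply rpow_ge_0).
  pose proof (rpow_gt_0 c0 s Hc0).
  apply rpow_lt_l; [split; [nra | exact HM] | apply Rinv_0_lt_compat, Hs].
Qed.

Lemma conj_exp_optimal_pos p s c0 : 1 < p -> p <= s -> 0 < c0 < conj_exp p ->
  exists x : nat -> C, in_lorentz p s x /\ c0 * lorentz_norm p s x < max_lorentz_norm p s x.
Proof.
  intros Hp Hps Hc0. set (K := conj_exp p) in *. set (gam := (p - 1) / p).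
  assert (HKg : K = / gam) by (unfold K, gam, conj_exp; field; lra).
  assert (Hgam : 0 < gam < 1)
    by (unfold gam; split; [apply Rdiv_lt_0_compat | apply -> Rdiv_lt_1]; lra).
  set (dl := (1 - c0 / K) / 2).
  assert (Hc0K : 0 < c0 / K < 1)
    by (split; [apply Rdiv_lt_0_compat | apply -> Rdiv_lt_1]; lra).
  assert (Hdl : 0 < dl < 1) by (unfold dl; lra).
  set (mu := rpow ((1 - dl) * K) s). set (cs := rpow c0 s).
  assert (Hcs : 0 < cs < mu).
  { split; [apply rpow_gt_0; lra | apply rpow_lt_l; [| lra]]. unfold dl.
    replace ((1 - (1 - c0 / K) / 2) * K) with ((K + c0) / 2) by (field; lra). lra. }
  destruct (exists_rpow_INR_ge (/ dl) (gam / 2) ltac:(lra)) as [n0 [Hn0 Hdn0]].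
  pose proof (lt_0_INR n0 Hn0) as Hn0r.
  set (eta := Rmin (s * gam / 2) ((mu - cs) / (4 * mu * INR n0))).
  assert (Heta : 0 < eta) by (apply Rmin_glb_lt; apply Rdiv_lt_0_compat; nra).
  assert (Hes : eta / s <= gam / 2).
  { apply Rmult_le_reg_r with s; [lra |]. unfold Rdiv at 1. rewrite Rmult_assoc, Rinv_l, Rmult_1_r by lra.
    pose proof (Rmin_l (s * gam / 2) ((mu - cs) / (4 * mu * INR n0))) as Hmin. fold eta in Hmin. lra. }
  set (g := gam - eta / s).
  assert (Hg : gam / 2 <= g < gam) by (pose proof (Rdiv_lt_0_compat eta s Heta ltac:(lra)); unfold g; lra).
  destruct (Series_mean_power_seq_ge p s g dl n0 Hp Hps Hdl Hg Hn0 Hdn0) as [Hex Hlow].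
  replace (s * ((p - 1) / p - g)) with eta in Hlow by (unfold g, gam; field; lra).
  exists (fun k => RtoC (power_seq g k)).
  assert (Hdec : forall k, power_seq g (S k) <= power_seq g k) by (intro; apply power_seq_nonincreasing; lra).
  split; [apply in_lorentz_RtoC; [apply power_seq_ge_0 | exact Hdec | exact Hex] |].
  rewrite lorentz_norm_RtoC, max_lorentz_norm_RtoC by (apply power_seq_ge_0 || exact Hdec).
  rewrite (Series_ext _ (zeta_term (1 + eta)))
    by (intro m; rewrite weighted_term_power_seq; f_equal; unfold g, gam; field; lra).
  apply mul_rpow_inv_lt; [lra | apply Series_ge_0; [intro; left; apply zeta_term_pos | apply ex_series_zeta_term; lra] | lra |].
  apply (large_zeta_absorbs_head cs mu (rpow ((1 - dl) / g) s) _ _ (INR n0) eta); try assumption.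
  - apply Rmin_r.
  - apply zeta_term_Series_ge_inv, Heta.
  - apply rpow_le_l; [split; [apply Rmult_le_pos |] |]; try lra.
    apply Rmult_le_compat_l; [lra |]. rewrite HKg. apply Rinv_le_contravar; lra.
Qed.

Lemma conj_exp_optimal p s c0 : 1 < p -> p <= s -> c0 < conj_exp p ->
  exists x : nat -> C, in_lorentz p s x /\ c0 * lorentz_norm p s x < max_lorentz_norm p s x.
Proof.
  intros Hp Hps Hc0. destruct (Rle_dec c0 0) as [Hneg | Hpos]; [| apply conj_exp_optimal_pos; lra].
  destruct (lorentz_norms_unit_seq p s Hp Hps) as [Hin [HL HM]].
  exists (fun k => RtoC (unit_seq k)). split; [exact Hin |]. rewrite HL, HM.
  assert (Hzeta : 1 <= zeta (s / conj_exp p + 1))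
    by (apply zeta_ge_1; rewrite zeta_exponent_eq by exact Hp; pose proof (weight_exponent_bounds p s Hp Hps); lra).
  pose proof (rpow_gt_0 (zeta (s / conj_exp p + 1)) (/ s) ltac:(lra)). lra.
Qed.

Theorem corollary3p6 (p s : R) (hp : 1 < p) (hps : p <= s) :
  (forall x : nat -> C, in_lorentz p s x ->
     ex_series (max_lorentz_term p s x) /\
     rpow (zeta (s / conj_exp p + 1)) (/ s) * lorentz_norm p s x
       <= max_lorentz_norm p s x /\
     max_lorentz_norm p s x <= conj_exp p * lorentz_norm p s x) /\
  (* optimality of the lower constant *)
  (forall c : R, rpow (zeta (s / conj_exp p + 1)) (/ s) < c ->
     exists x : nat -> C, in_lorentz p s x /\
       max_lorentz_norm p s x < c * lorentz_norm p s x) /\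
  (* optimality of the upper constant *)
  (forall c : R, c < conj_exp p ->
     exists x : nat -> C, in_lorentz p s x /\
       c * lorentz_norm p s x < max_lorentz_norm p s x).
Proof.
  split; [| split].
  - intros x Hx. apply lorentz_norm_bounds; assumption.
  - intros c Hc. destruct (lorentz_norms_unit_seq p s hp hps) as [Hin [HL HM]].
    exists (fun k => RtoC (unit_seq k)). split; [exact Hin |]. rewrite HL, HM. lra.
  - intros c Hc. apply conj_exp_optimal; assumption.
Qed.
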